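(* Let $(R_1,d_1)$, $(R_2,d_2)$ be finitely generated fusion algebras and $(R,d)$ their product fusion algebra. Then $\omega(R,d)=\max(\omega(R_1,d_1),\omega(R_2,d_2))$.
   Context: A fusion algebra $(R,d)$ consists of a set $I$ with distinguished $e$ and involution $\alpha\mapsto\bar\alpha$, a unital ring structure on $R=\mathbb{Z}[I]$ with unit $e$ and $\xi\eta=\sum_\alpha N^\alpha_{\xi,\eta}\alpha$, $N^\alpha_{\xi,\eta}\in\mathbb{Z}_{\ge0}$ finitely many nonzero, the involution extending to a $\mathbb{Z}$-linear antimultiplicative involution, Frobenius reciprocity $N^\alpha_{\xi,\eta}=N^\xi_{\alpha,\bar\eta}=N^\eta_{\bar\xi,\alpha}$, and $\mathbb{Z}$-linear multiplicative $d:R\to\mathbb{R}$ with $d(\bar\alpha)=d(\alpha)\ge1$ on $I$. $|A|=\sum_{\alpha\in A}d(\alpha)^2$. A finite generating set is a finite $X\subseteq I$, $\bar X=X$, such that every $\alpha\in I$ has nonzero coefficient in some $x_1\cdots x_n$, $x_i\in X$; finitely generated means such $X$ exists. $\ell_X(e)=0$, otherwise $\ell_X(\alpha)$ is the least such $n\ge1$; $B_X(n)=\{\alpha:\ell_X(\alpha)\le n\}$; $\omega_X=\lim_n|B_X(n)|^{1/n}$ (exists), $\omega=\inf_X\omega_X$ over finite generating sets. The product fusion algebra of $(R_i,d_i)$ with irreducibles $I_i$ is $R=R_1\otimes_{\mathbb{Z}}R_2$ with irreducibles $I=I_1\times I_2$ (elements written $\alpha\boxtimes\beta$), unit $e_1\boxtimes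 e_2$, involution $\overline{\alpha\boxtimes\beta}=\bar\alpha\boxtimes\bar\beta$, structure constants $N^{\alpha\boxtimes\alpha'}_{\xi\boxtimes\xi',\eta\boxtimes\eta'}=N^\alpha_{\xi,\eta}N^{\alpha'}_{\xi',\eta'}$ and dimension $d(\alpha\boxtimes\beta)=d_1(\alpha)d_2(\beta)$. *)

From HB Require Import structures.
From mathcomp Require Import all_boot all_order all_algebra.
From mathcomp Require Import all_classical all_reals all_analysis.
From mathcomp Require Import Rstruct.
Set Implicit Arguments. Unset Strict Implicit. Unset Printing Implicit Defensive.
Import Order.TTheory GRing.Theory Num.Theory.
Local Open Scope classical_set_scope.
Local Open Scope ring_scope.

(** Raw data of a fusion algebra (R = Z[I], d).  [fa_N a x y] is the structure
    constant N^a_{x,y}, i.e. x*y = sum_a N^a_{x,y} a. *)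
Record fusion_data := FusionData {
  fa_I : choiceType;
  fa_e : fa_I;
  fa_bar : fa_I -> fa_I;
  fa_N : fa_I -> fa_I -> fa_I -> nat;
  fa_d : fa_I -> Rdefinitions.R;
}.

Section FusionDefs.
Variable A : fusion_data.
Local Notation I := (fa_I A).
Local Notation e := (@fa_e A).
Local Notation bar := (@fa_bar A).
Local Notation N := (@fa_N A).
Local Notation d := (@fa_d A).

Definition nsum (F : I -> nat) : nat := (\sum_(b \in [set: I]) F b)%R.

Definition is_fusion_algebra : Prop :=
  (forall a, bar (bar a) = a) /\
  (forall x y, finite_set [set a | N a x y != 0%N]) /\
  (forall x a, N a e x = (a == x) :> nat /\ N a x e = (a == x) :> nat) /\
  (* associativity of the multiplication on Z[I]: (xy)z = x(yz) *)
  (forall x y z a,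
      nsum (fun b => N b x y * N a b z)%N = nsum (fun b => N b y z * N a x b)%N) /\
  (* the involution extends to an antimultiplicative map: bar(xy) = bar y bar x *)
  (forall a x y, N (bar a) (bar y) (bar x) = N a x y) /\
  (forall a x y, N a x y = N x a (bar y) /\ N a x y = N y (bar x) a) /\
  (* d is (the restriction to I of) a Z-linear multiplicative map *)
  (forall x y, d x * d y = \sum_(a \in [set: I]) (N a x y)%:R * d a) /\
  (forall a, d (bar a) = d a) /\
  (forall a, 1 <= d a).

(** Coefficient of a in the product x_1 * (x_2 * ( ... * x_n)) (empty product = e). *)
Fixpoint prod_coef (xs : seq I) (a : I) : nat :=
  match xs with
  | [::] => (a == e)
  | x :: xs' => nsum (fun b => N a x b * prod_coef xs' b)%N
  end.

Definition is_gen_set (X : set I) : Prop :=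
  [/\ finite_set X, bar @` X = X &
      forall a, exists xs : seq I,
        [/\ (0 < size xs)%N, (forall x, x \in xs -> X x) & prod_coef xs a != 0%N]].

Definition finitely_generated : Prop := exists X, is_gen_set X.

(** Ball B_X(n) = {a | l_X(a) <= n}, with l_X(e) = 0. *)
Definition ball (X : set I) (n : nat) : set I :=
  [set a | a = e \/ exists xs : seq I,
     [/\ (0 < size xs <= n)%N, (forall x, x \in xs -> X x) & prod_coef xs a != 0%N]].

Definition dmass (S : set I) : Rdefinitions.R := \sum_(a \in S) d a ^+ 2.

Definition omega_X (X : set I) : Rdefinitions.R :=
  limn (fun n : nat => powR (dmass (ball X n)) (n%:R)^-1).

Definition omega : Rdefinitions.R := inf [set omega_X X | X in is_gen_set].

End FusionDefs.

Definition product_fusion (A1 A2 : fusion_data) : fusion_data :=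
  @FusionData (fa_I A1 * fa_I A2)%type
    (@fa_e A1, @fa_e A2)
    (fun p => (@fa_bar A1 p.1, @fa_bar A2 p.2))
    (fun a x y => (@fa_N A1 a.1 x.1 y.1 * @fa_N A2 a.2 x.2 y.2)%N)
    (fun p => @fa_d A1 p.1 * @fa_d A2 p.2).

(* For a finite generating set X, the masses b_X(n) = |B_X(n)| of the balls are
   submultiplicative, because the support of a product is associative; by Fekete's lemma
   omega_X = lim b_X(n)^(1/n) is then the infimum of the b_X(n)^(1/n).
   The coordinate projections of the product map balls onto balls without increasing
   dimensions, so omega_X >= omega(R_i) for every generating set X of the product.
   Conversely, X = X_1 x {e} u {e} x X_2 generates the product, and a word in X of length n
   splits into words in X_1 and X_2 of lengths k and n - k, so that
   b_X(n) <= sum_k b_{X_1}(k) b_{X_2}(n - k) <= (n + 1) C g^n for every g larger than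
   omega_{X_1} and omega_{X_2}; hence omega_X <= max(omega_{X_1}, omega_{X_2}). *)

From Pilot Require Import Defs.
From HB Require Import structures.
From mathcomp Require Import all_boot all_order all_algebra.
From mathcomp Require Import all_classical all_reals all_analysis.
From mathcomp Require Import Rstruct.
From mathcomp Require Import lra.
Import Order.TTheory GRing.Theory Num.Theory.
Set Implicit Arguments. Unset Strict Implicit. Unset Printing Implicit Defensive.
Local Open Scope classical_set_scope.
Local Open Scope ring_scope.

(** * Growth rates of real sequences *)

Section GrowthRate.
Variable R : realType.
Implicit Types (b : nat -> R) (c g h : R).

Definition growth_rate b : R := inf [set b n `^ n%:R^-1 | n in [set n | (0 < n)%N]].

Lemma growth_rate_le b n : (0 < n)%N -> growth_rate b <= b n `^ n%:R^-1.
Proof. by move=> n0; apply: ge_inf; [exists 0 => _ [m _ <-]; apply: powR_ge0|exists n]. Qed.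

Lemma growth_rate_ge0 b : 0 <= growth_rate b.
Proof. by apply: lb_le_inf => [|_ [n _ <-]]; [exists (b 1%N `^ 1%:R^-1), 1%N|apply: powR_ge0]. Qed.

Lemma growth_rate_lt b h : growth_rate b < h -> exists2 n, (0 < n)%N & b n `^ n%:R^-1 < h.
Proof.
move=> bh; have [|_ [n n0 <-] ?] := inf_lt _ bh; first by exists (b 1%N `^ 1%:R^-1), 1%N.
by exists n.
Qed.

Lemma growth_rate_le_near b h :
  (\forall n \near \oo, b n `^ n%:R^-1 <= h) -> growth_rate b <= h.
Proof. by case=> N _ bh; apply: le_trans (growth_rate_le b (ltn0Sn N)) (bh _ (leqnSn N)). Qed.

Lemma le_growth_rate b b' : (forall n, 0 <= b n <= b' n) -> growth_rate b <= growth_rate b'.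
Proof.
move=> bb'; apply: lb_le_inf => [|_ [n n0 <-]]; first by exists (b' 1%N `^ 1%:R^-1), 1%N.
have /andP[b0 le_bb'] := bb' n.
apply: le_trans (growth_rate_le b n0) _.
by apply: ge0_ler_powR; rewrite ?nnegrE ?invr_ge0// (le_trans b0).
Qed.

Lemma powR_inv_natK c n : 0 <= c -> (0 < n)%N -> (c `^ n%:R^-1) ^+ n = c.
Proof.
by move=> c0 n0; rewrite -powR_mulrn ?powR_ge0// -powRrM mulVf ?powRr1// pnatr_eq0 -lt0n.
Qed.

Lemma exprn_powR_invK c n : 0 <= c -> (0 < n)%N -> (c ^+ n) `^ n%:R^-1 = c.
Proof. by move=> c0 n0; rewrite -powR_mulrn// -powRrM mulfV ?powRr1// pnatr_eq0 -lt0n. Qed.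

Lemma linear_le_expR_near c y : 0 <= c -> 0 < y ->
  \forall n \near \oo, n.+1%:R * c <= expR (n%:R * y).
Proof.
move=> c0 y0; near=> n; apply: le_trans (expR_ge1Dxn 1 (mulr_ge0 (ler0n _ n) (ltW y0))).
have n1 : 1 <= n%:R :> R by rewrite ler1n; near: n; exists 1%N.
have ny : 4 * c <= n%:R * y ^+ 2.
  rewrite -ler_pdivrMr ?exprn_gt0//; apply: ltW; apply: lt_le_trans (truncnS_gt _) _.
  by rewrite ler_nat; near: n; exists (Num.truncn (4 * c / y ^+ 2)).+1.
have nny : n%:R * (4 * c) <= n%:R * (n%:R * y ^+ 2) by rewrite ler_wpM2l.
have -> : 2`!%:R = 2 :> R by [].
rewrite -natr1 exprMn; nra.
Unshelve. all: by end_near.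
Qed.

Lemma root_le_near b c g h : 0 <= c -> 0 < g < h -> (forall n, 0 <= b n) ->
  (forall n, b n <= n.+1%:R * c * g ^+ n) -> \forall n \near \oo, b n `^ n%:R^-1 <= h.
Proof.
move=> c0 /andP[g0 gh] b0 bn.
have hg : 0 < ln (h / g) by rewrite ln_gt0 // ltr_pdivlMr // mul1r.
near=> n; have n0 : (0 < n)%N by near: n; exists 1%N.
rewrite -[h in leRHS](exprn_powR_invK _ n0) ?(ltW (lt_trans g0 gh))//.
apply: ge0_ler_powR; rewrite ?nnegrE ?invr_ge0 ?exprn_ge0 ?(ltW (lt_trans g0 gh))//.
apply: le_trans (bn n) _; rewrite -[h](divfK (lt0r_neq0 g0)) exprMn.
apply: ler_wpM2r; first by rewrite exprn_ge0 ?ltW.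
have -> : h / g = expR (ln (h / g)) by rewrite lnK // posrE divr_gt0 // (lt_trans g0 gh).
rewrite -expRM_natl.
by near: n; apply: linear_le_expR_near.
Unshelve. all: by end_near.
Qed.
End GrowthRate.

Record submultiplicative (R : realType) (b : nat -> R) : Prop := Submultiplicative {
  submul_ge1 : forall n, 1 <= b n;
  submul_le : forall m n, b (m + n) <= b m * b n;
  submul_homo : {homo b : m n / (m <= n)%N >-> m <= n} }.

Section Fekete.
Variables (R : realType) (b : nat -> R).
Hypothesis hb : submultiplicative b.

Lemma submul_ge0 n : 0 <= b n. Proof. exact: le_trans ler01 (submul_ge1 hb n). Qed.

Lemma submul_root_ge1 n : 1 <= b n `^ n%:R^-1.
Proof. by rewrite -[leLHS](powRr0 (b n)) ler_powR ?submul_ge1 ?invr_ge0. Qed.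

Lemma submul_le_expn K q : b (q.+1 * K) <= b K ^+ q.+1.
Proof.
elim: q => [|q IHq]; first by rewrite mul1n expr1.
rewrite mulSn exprS; apply: le_trans (submul_le hb _ _) _.
by rewrite ler_wpM2l ?submul_ge0.
Qed.

Lemma submul_le_geometric K g n : (0 < K)%N -> b K `^ K%:R^-1 <= g -> b n <= b K * g ^+ n.
Proof.
move=> K0 uKg; apply: le_trans (submul_homo hb (ltnW (ltn_ceil n K0))) _.
apply: le_trans (submul_le_expn K (n %/ K)) _.
rewrite exprS ler_wpM2l ?submul_ge0// -{1}(powR_inv_natK (submul_ge0 K) K0) -exprM.
apply: le_trans (_ : _ <= (b K `^ K%:R^-1) ^+ n) _.
  by apply: ler_weXn2l; [exact: submul_root_ge1|rewrite mulnC leq_divM].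
by apply: lerXn2r; rewrite ?nnegrE ?(le_trans _ uKg) ?powR_ge0.
Qed.

Lemma submul_root_le_near K h : (0 < K)%N -> b K `^ K%:R^-1 < h ->
  \forall n \near \oo, b n `^ n%:R^-1 <= h.
Proof.
move=> K0 uKh; apply: (root_le_near (c := b K) (g := b K `^ K%:R^-1)) => [||n|n].
- exact: submul_ge0.
- by rewrite uKh andbT (lt_le_trans ltr01) ?submul_root_ge1.
- exact: submul_ge0.
apply: le_trans (submul_le_geometric n K0 (lexx _)) _; rewrite -mulrA ler_peMl ?ler1n//.
by rewrite mulr_ge0 ?exprn_ge0 ?powR_ge0 ?submul_ge0.
Qed.

Theorem fekete : limn (fun n => b n `^ n%:R^-1) = growth_rate b.
Proof.
apply: cvg_lim => //; apply/cvgrPdist_le => eps e0.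
have [K K0 uK] : exists2 K, (0 < K)%N & b K `^ K%:R^-1 < growth_rate b + eps.
  by apply: growth_rate_lt; rewrite ltrDl.
near=> n; have n0 : (0 < n)%N by near: n; exists 1%N.
have lo := growth_rate_le b n0.
have hi : b n `^ n%:R^-1 <= growth_rate b + eps by near: n; apply: submul_root_le_near uK.
by rewrite ler_norml; apply/andP; split; lra.
Unshelve. all: by end_near.
Qed.

End Fekete.

Lemma growth_rate_convolution (R : realType) (b1 b2 b : nat -> R) :
  submultiplicative b1 -> submultiplicative b2 ->
  (forall n, 0 <= b n <= \sum_(k < n.+1) b1 k * b2 (n - k)%N) ->
  growth_rate b <= Num.max (growth_rate b1) (growth_rate b2).
Proof.
move=> hb1 hb2 hb; apply/ler_addgt0Pr => eps e0.
have [K1 K10 u1] : exists2 K, (0 < K)%N & b1 K `^ K%:R^-1 < growth_rate b1 + eps.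
  by apply: growth_rate_lt; rewrite ltrDl.
have [K2 K20 u2] : exists2 K, (0 < K)%N & b2 K `^ K%:R^-1 < growth_rate b2 + eps.
  by apply: growth_rate_lt; rewrite ltrDl.
set g := Num.max (b1 K1 `^ K1%:R^-1) (b2 K2 `^ K2%:R^-1).
apply: growth_rate_le_near; apply: (root_le_near (c := b1 K1 * b2 K2) (g := g)) => [||n|n].
- by rewrite mulr_ge0 ?submul_ge0.
- rewrite lt_max (lt_le_trans ltr01) ?submul_root_ge1 //=.
  by rewrite gt_max (lt_le_trans u1) ?(lt_le_trans u2) // lerD2r le_max lexx ?orbT.
- by case/andP: (hb n).
apply: le_trans (proj2 (andP (hb n))) _.
apply: le_trans (_ : _ <= \sum_(k < n.+1) b1 K1 * b2 K2 * g ^+ n) _; last first.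
  by rewrite sumr_const card_ord -[in leRHS]mulrA mulr_natl.
apply: ler_sum => -[k /= kn] _; rewrite -(subnKC (kn : (k <= n)%N)) addKn exprD mulrACA.
by apply: ler_pM; rewrite ?submul_ge0 ?submul_le_geometric ?le_max ?lexx ?orbT.
Qed.

(** * Balls of fusion algebras *)

Lemma ler_fsum (J : choiceType) (P : set J) (F G : J -> Rdefinitions.R) :
  finite_set P -> (forall i, P i -> F i <= G i) -> \sum_(i \in P) F i <= \sum_(i \in P) G i.
Proof.
move=> fP FG; rewrite !fsbig_finite //= big_seq [leRHS]big_seq; apply: ler_sum => i.
by rewrite in_fset_set // inE => /FG.
Qed.

Lemma fsum_ge_term (J : choiceType) (P : set J) (F : J -> Rdefinitions.R) j :
  finite_set [set i | P i /\ F i != 0] -> (forall i, P i -> 0 <= F i) -> P j ->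
  F j <= \sum_(i \in P) F i.
Proof.
move=> fin F0 Pj; have [->|Fj] := eqVneq (F j) 0; first exact: fsumr_ge0.
rewrite fsbig_supp (fsbigD1 j) /=.
- by rewrite lerDl fsumr_ge0 // => i [[/F0]].
- by apply: sub_finite_set fin => i [Pi /= /eqP].
- by split=> //; apply/eqP.
Qed.

Section Mass.
Variable A : fusion_data.
Local Notation I := (fa_I A).
Local Notation d := (@fa_d A).
Local Notation dmass := (@dmass A).
Implicit Types S T : set I.

Lemma nsum_neq0 (F : I -> nat) : nsum F != 0%N -> exists b, F b != 0%N.
Proof. by move=> /(@fsbigN1 _ _ _ unit _ _ (fun=> F) tt) [b _ Fb]; exists b. Qed.

Lemma nsum_neq0P (F : I -> nat) :
  finite_set [set b | F b != 0%N] -> nsum F != 0%N <-> exists b, F b != 0%N.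
Proof.
move=> fin; split=> [|[b Fb]]; first exact: nsum_neq0.
rewrite /nsum fsbig_supp (fsbigD1 b) //= ?addn_eq0 ?negb_and ?Fb//.
  by rewrite setTI; apply: sub_finite_set fin => x /= /eqP.
by split=> //; apply/eqP.
Qed.

Lemma dmass_ge0 S : 0 <= dmass S.
Proof. by apply: fsumr_ge0 => a _; apply: sqr_ge0. Qed.

Lemma le_dmass S T : finite_set T -> S `<=` T -> dmass S <= dmass T.
Proof.
move=> fT ST; rewrite -(setDUK ST) /dmass fsbigU0 ?lerDl ?dmass_ge0//.
- exact: sub_finite_set fT.
- exact: finite_setD.
- by move=> a [Sa [_]].
Qed.

Lemma dmassU_le S T : finite_set S -> finite_set T -> dmass (S `|` T) <= dmass S + dmass T.
Proof.
move=> fS fT; rewrite -[S `|` T](setD0 _) -(setDv S) -setUDr /dmass fsbigU0 ?lerD2l//.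
- by apply: le_dmass => //; apply: subDsetl.
- exact: finite_setD.
- by move=> a [Sa [_]].
Qed.

Lemma dmass_bigsetU_le (J : Type) (r : seq J) (F : J -> set I) : (forall j, finite_set (F j)) ->
  dmass (\big[setU/set0]_(j <- r) F j) <= \sum_(j <- r) dmass (F j).
Proof.
move=> fF; elim: r => [|j r IHr]; first by rewrite !big_nil /dmass fsbig_set0.
rewrite !big_cons; apply: le_trans (dmassU_le _ _) _ => //; last by rewrite lerD2l.
by elim: r {IHr} => [|k r IHr]; rewrite ?big_nil ?big_cons ?finite_setU.
Qed.

Lemma dmass_image_le (A' : fusion_data) (f : I -> fa_I A') S : finite_set S ->
  (forall a, S a -> fa_d (f a) ^+ 2 <= d a ^+ 2) -> @Defs.dmass A' (f @` S) <= dmass S.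
Proof.
move=> fS fd; pose g a' := xget (fa_e A) [set a | S a /\ f a = a'].
have gP a' : (f @` S) a' -> S (g a') /\ f (g a') = a'.
  by case=> a Sa <-; rewrite /g; case: xgetP => // /(_ a) [].
have -> : @Defs.dmass A' (f @` S) = \sum_(a \in g @` (f @` S)) fa_d (f a) ^+ 2.
  rewrite fsbig_image; first by apply: eq_fsbigr => a' /[!inE] /gP[_ ->].
  by move=> x y /[!inE] /gP[_ fgx] /gP[_ fgy] gxy; rewrite -fgx -fgy gxy.
have gS : g @` (f @` S) `<=` S by move=> _ [a' /gP[Sga _] <-].
have fgS : finite_set (g @` (f @` S)) by apply: sub_finite_set fS.
apply: le_trans (le_dmass fS gS); apply: ler_fsum => // a /gS; exact: fd.
Qed.

Lemma dmass_setX (A' : fusion_data) S (S' : set (fa_I A')) : finite_set S -> finite_set S' ->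
  @Defs.dmass (product_fusion A A') (S `*` S') = dmass S * @Defs.dmass A' S'.
Proof.
move=> fS fS'; rewrite /Defs.dmass -(pair_fsbig _ (fun a a' => (d a * fa_d a') ^+ 2)) //.
rewrite mulr_fsuml; apply: eq_fsbigr => a _; rewrite mulr_fsumr; apply: eq_fsbigr => a' _.
by rewrite exprMn.
Qed.

End Mass.

(* The consequences of the fusion algebra axioms that govern the growth of balls;
   unlike [is_fusion_algebra], they pass to products coordinatewise. *)
Record support_axioms (A : fusion_data) : Prop := SupportAxioms {
  N_supp_finite : forall x y : fa_I A, finite_set [set a | fa_N a x y != 0%N];
  N_unit_neq0 : forall a b : fa_I A, (fa_N a (fa_e A) b != 0%N) = (a == b);
  N_supp_assoc : forall a x b' b c : fa_I A, fa_N a x b' != 0%N -> fa_N b' b c != 0%N ->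
    exists2 b'', fa_N b'' x b != 0%N & fa_N a b'' c != 0%N;
  N_supp_mass : forall b c : fa_I A,
    \sum_(a \in [set a | fa_N a b c != 0%N]) fa_d a ^+ 2 <= (fa_d b * fa_d c) ^+ 2;
  dim_ge1 : forall a : fa_I A, 1 <= fa_d a;
  N_supp_neq0 : forall x y : fa_I A, exists a, fa_N a x y != 0%N }.

Lemma dim_ge0 (A : fusion_data) : support_axioms A -> forall a : fa_I A, 0 <= fa_d a.
Proof. by move=> hA a; apply: le_trans ler01 (dim_ge1 hA a). Qed.

Section FusionAlgebra.
Variable A : fusion_data.
Hypothesis hA : is_fusion_algebra A.
Local Notation I := (fa_I A).
Local Notation e := (@fa_e A).
Local Notation N := (@fa_N A).
Local Notation d := (@fa_d A).

Let N_finite x y : finite_set [set a | N a x y != 0%N].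
Proof. by case: hA => _ []. Qed.

Let N_e x a : N a e x = (a == x) /\ N a x e = (a == x).
Proof. by case: hA => _ [_ []]. Qed.

Let N_assoc x y z a :
  nsum (fun b => N b x y * N a b z)%N = nsum (fun b => N b y z * N a x b)%N.
Proof. by case: hA => _ [_ [_ []]]. Qed.

Let N_frob a x y : N a x y = N x a (fa_bar y) /\ N a x y = N y (fa_bar x) a.
Proof. by case: hA => _ [_ [_ [_ [_ []]]]]. Qed.

Let d_mul x y : d x * d y = \sum_(a \in [set: I]) (N a x y)%:R * d a.
Proof. by case: hA => _ [_ [_ [_ [_ [_ []]]]]]. Qed.

Let d_ge1 a : 1 <= d a.
Proof. by case: hA => _ [_ [_ [_ [_ [_ [_ []]]]]]]. Qed.

Let d_ge0 a : 0 <= d a. Proof. exact: le_trans ler01 (d_ge1 a). Qed.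

Lemma fusion_bar_e : fa_bar e = e.
Proof.
have := (N_frob e e e).1; rewrite (N_e e e).1 eqxx (N_e _ _).1.
by case: eqVneq.
Qed.

Lemma dim_le_mul a b c : N a b c != 0%N -> d a <= d b * d c.
Proof.
move=> Nabc; have le_term : d a <= (N a b c)%:R * d a by rewrite ler_peMl // ler1n lt0n.
apply: le_trans le_term _; rewrite d_mul.
apply: (fsum_ge_term (F := fun a => (N a b c)%:R * d a)) => // [|i _]; last by rewrite mulr_ge0.
by apply: sub_finite_set (N_finite b c) => a' /= [_]; apply: contra => /eqP ->; rewrite mul0r.
Qed.

Lemma fusion_supp_assoc a x b' b c : N a x b' != 0%N -> N b' b c != 0%N ->
  exists2 b'', N b'' x b != 0%N & N a b'' c != 0%N.
Proof.
move=> Nab' Nb'c.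
have fin_xb_c : finite_set [set b'' | (N b'' x b * N a b'' c)%N != 0%N].
  by apply: sub_finite_set (N_finite x b) => b'' /=; rewrite muln_eq0 negb_or => /andP[].
have fin_x_bc : finite_set [set b'' | (N b'' b c * N a x b'')%N != 0%N].
  by apply: sub_finite_set (N_finite b c) => b'' /=; rewrite muln_eq0 negb_or => /andP[].
have : nsum (fun b'' => N b'' b c * N a x b'')%N != 0%N.
  by apply/(nsum_neq0P fin_x_bc); exists b'; rewrite muln_eq0 negb_or Nb'c Nab'.
rewrite -N_assoc => /(nsum_neq0P fin_xb_c) [b''].
by rewrite muln_eq0 negb_or => /andP[]; exists b''.
Qed.

(* d a ^+ 2 <= N^a_{b,c} d a * (d b * d c), and the N^a_{b,c} d a sum up to d b * d c. *)
Lemma fusion_supp_mass b c :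
  \sum_(a \in [set a | N a b c != 0%N]) d a ^+ 2 <= (d b * d c) ^+ 2.
Proof.
pose F a := (N a b c)%:R * d a.
apply: le_trans (_ : _ <= \sum_(a \in [set a | N a b c != 0%N]) F a * (d b * d c)) _.
  apply: ler_fsum => // a Nabc; rewrite expr2 ler_pM ?dim_le_mul//.
  by rewrite ler_peMl // ler1n lt0n.
rewrite -mulr_fsuml expr2 ler_wpM2r ?mulr_ge0// d_mul le_eqVlt; apply/orP; left; apply/eqP.
by apply: fsbig_widen => // a [_ /=] /negP; rewrite negbK /F => /eqP ->; rewrite mul0r.
Qed.

Lemma fusion_support_axioms : support_axioms A.
Proof.
split=> //; [|exact: fusion_supp_assoc|exact: fusion_supp_mass|].
  by move=> a b; have [-> _] := N_e b a; case: (a == b).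
move=> x y; have : d x * d y != 0 by rewrite mulf_neq0 // gt_eqF // (lt_le_trans ltr01).
rewrite d_mul => /(@fsbigN1 _ _ _ unit _ _ (fun _ a => (N a x y)%:R * d a) tt) [a _ Na].
by exists a; apply: contraNneq Na => ->; rewrite mul0r.
Qed.

End FusionAlgebra.

Section Balls.
Variable A : fusion_data.
Hypothesis hA : support_axioms A.
Local Notation I := (fa_I A).
Local Notation e := (@fa_e A).
Local Notation N := (@fa_N A).
Local Notation d := (@fa_d A).
Local Notation prod_coef := (@prod_coef A).
Local Notation ball := (@Defs.ball A).
Local Notation dmass := (@Defs.dmass A).
Implicit Types (X S T : set I) (xs : seq I).

Lemma prod_coef_nil a : (prod_coef [::] a != 0%N) = (a == e).
Proof. by rewrite /=; case: (a == e). Qed.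

Lemma prod_coef_supp_finite xs : finite_set [set a | prod_coef xs a != 0%N].
Proof.
elim: xs => [|x xs IHxs].
  by apply: sub_finite_set (finite_set1 e) => a /=; rewrite prod_coef_nil => /eqP.
apply: (sub_finite_set (B := \bigcup_(b in [set b | prod_coef xs b != 0%N])
  [set a | N a x b != 0%N])).
  by move=> a /= /nsum_neq0 [b]; rewrite muln_eq0 negb_or => /andP[]; exists b.
by apply: bigcup_finite => // b _; apply: N_supp_finite.
Qed.

Lemma prod_coef_cons x xs a :
  prod_coef (x :: xs) a != 0%N <-> exists2 b, N a x b != 0%N & prod_coef xs b != 0%N.
Proof.
have fin : finite_set [set b | (N a x b * prod_coef xs b)%N != 0%N].
  by apply: sub_finite_set (prod_coef_supp_finite xs) => b /=; rewrite muln_eq0 negb_or => /andP[].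
apply: iff_trans (nsum_neq0P fin) _; split=> -[b]; rewrite ?muln_eq0 ?negb_or.
  by case/andP; exists b.
by move=> Nab pb; exists b; rewrite muln_eq0 negb_or Nab pb.
Qed.

Lemma prod_coef_filter_e ws a :
  prod_coef [seq w <- ws | w != e] a != 0%N <-> prod_coef ws a != 0%N.
Proof.
elim: ws a => [//|w ws IHws] a /=; have [->|w_e] /= := eqVneq w e.
  rewrite IHws prod_coef_cons; split=> [pa|[b]]; last by rewrite N_unit_neq0 // => /eqP ->.
  by exists a; rewrite ?N_unit_neq0.
by rewrite !prod_coef_cons; split=> -[b Nab /IHws]; exists b.
Qed.

Lemma prod_coef_eq_filter_e xs ys a :
  [seq w <- xs | w != e] = [seq w <- ys | w != e] ->
  prod_coef xs a != 0%N -> prod_coef ys a != 0%N.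
Proof. by move=> xs_ys /prod_coef_filter_e; rewrite xs_ys => /prod_coef_filter_e. Qed.

Lemma prod_coef_exists xs : exists a, prod_coef xs a != 0%N.
Proof.
elim: xs => [|x xs [b pb]]; first by exists e; rewrite prod_coef_nil.
by have [a Nab] := N_supp_neq0 hA x b; exists a; apply/prod_coef_cons; exists b.
Qed.

Definition supp_mul S T : set I := [set a | exists b c, [/\ S b, T c & N a b c != 0%N]].

Lemma supp_mul_finite S T : finite_set S -> finite_set T -> finite_set (supp_mul S T).
Proof.
move=> fS fT; apply: (sub_finite_set
  (B := \bigcup_(b in S) \bigcup_(c in T) [set a | N a b c != 0%N])).
  by move=> a [b [c [Sb Tc Nabc]]]; exists b => //; exists c.
by apply: bigcup_finite => // b _; apply: bigcup_finite => // c _; apply: N_supp_finite.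
Qed.

Lemma supp_mulSl S S' T : S `<=` S' -> supp_mul S T `<=` supp_mul S' T.
Proof. by move=> SS' a [b [c [Sb Tc Nabc]]]; exists b, c; split => //; apply: SS'. Qed.

Lemma dmass_supp_mul_le S T : finite_set S -> finite_set T ->
  dmass (supp_mul S T) <= dmass S * dmass T.
Proof.
move=> fS fT; have fST := finite_setX fS fT.
pose F (p : I * I) := [set a | N a p.1 p.2 != 0%N].
have F_fin p : finite_set (F p) by apply: N_supp_finite.
have cover : supp_mul S T `<=` \big[setU/set0]_(p <- finmap.enum_fset (fset_set (S `*` T))) F p.
  by rewrite bigsetU_fset_set // => a [b [c [Sb Tc Nabc]]]; exists (b, c).
apply: le_trans (le_dmass _ cover) _.
  by rewrite bigsetU_fset_set //; apply: bigcup_finite.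
apply: le_trans (dmass_bigsetU_le _ F_fin) _.
apply: le_trans (_ : _ <= \sum_(p <- finmap.enum_fset (fset_set (S `*` T))) (d p.1 * d p.2) ^+ 2) _.
  by apply: ler_sum => p _; apply: N_supp_mass.
by rewrite -fsbig_finite // -(dmass_setX fS fT); apply: lexx.
Qed.

Lemma ball_e X n : ball X n e.
Proof. by left. Qed.

Lemma subset_ball X m n : (m <= n)%N -> ball X m `<=` ball X n.
Proof.
move=> mn a [->|[xs [/andP[xs0 xsm] Xxs pa]]]; first exact: ball_e.
by right; exists xs; rewrite xs0 (leq_trans xsm mn).
Qed.

Lemma ball_word X ws a :
  (forall x, x \in ws -> X x) -> prod_coef ws a != 0%N -> ball X (size ws) a.
Proof.
case: ws => [|w ws] Xws pa; first by left; move: pa; rewrite prod_coef_nil => /eqP.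
by right; exists (w :: ws); split; rewrite //= leqnn.
Qed.

Lemma ballS_sub X n : ball X n.+1 `<=` ball X n `|` supp_mul X (ball X n).
Proof.
move=> a [->|[[|x xs] [/andP[// _ xsn] Xxs /prod_coef_cons [b Naxb pb]]]].
  by left; apply: ball_e.
right; exists x, b; split => //; first by apply: Xxs; rewrite inE eqxx.
apply: (subset_ball (xsn : (size xs <= n)%N)); apply: ball_word pb => y y_xs.
by apply: Xxs; rewrite inE y_xs orbT.
Qed.

Lemma supp_mul_ball X n : supp_mul X (ball X n) `<=` ball X n.+1.
Proof.
move=> a [x [b [Xx [->|[xs [/andP[_ xsn] Xxs pb]]] Naxb]]]; right.
  exists [:: x]; split => //; first by move=> y; rewrite inE => /eqP ->.
  by apply/prod_coef_cons; exists e; rewrite ?prod_coef_nil.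
exists (x :: xs); split => //; last by apply/prod_coef_cons; exists b.
by move=> y; rewrite inE => /orP[/eqP ->//|]; apply: Xxs.
Qed.

Lemma ball_finite X n : finite_set X -> finite_set (ball X n).
Proof.
move=> fX; elim: n => [|n IHn].
  apply: sub_finite_set (finite_set1 e) => a [//|[xs [/andP[xs0 xs_le0]]]].
  by rewrite leqn0 in xs_le0; rewrite (eqP xs_le0) in xs0.
apply: sub_finite_set (@ballS_sub X n) _.
by rewrite finite_setU; split=> //; apply: supp_mul_finite.
Qed.

Lemma ballD_sub X m n : ball X (m + n) `<=` supp_mul (ball X m) (ball X n).
Proof.
elim: m => [|m IHm] a.
  by move=> Ba; exists e, a; rewrite N_unit_neq0 // eqxx; split=> //; apply: ball_e.
rewrite addSn => /ballS_sub [/IHm|[x [b' [Xx /IHm [b [c [Bb Bc Nb'bc]]] Naxb']]]].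
  by apply: supp_mulSl; apply: subset_ball.
have [b'' Nb''xb Nab''c] := N_supp_assoc hA Naxb' Nb'bc.
by exists b'', c; split => //; apply: supp_mul_ball; exists x, b.
Qed.

Definition ball_mass X n := dmass (ball X n).

Lemma ball_mass_submultiplicative X : finite_set X -> submultiplicative (ball_mass X).
Proof.
move=> fX; split=> [n|m n|m n mn].
- apply: le_trans (le_dmass (ball_finite n fX) (_ : [set e] `<=` _)).
    by rewrite /dmass fsbig_set1 expr_ge1 ?dim_ge1 ?dim_ge0.
  by move=> a ->; apply: ball_e.
- apply: le_trans (dmass_supp_mul_le (ball_finite m fX) (ball_finite n fX)).
  by apply: le_dmass (@ballD_sub X m n); apply: supp_mul_finite; apply: ball_finite.
- by apply: le_dmass (subset_ball mn); apply: ball_finite.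
Qed.

End Balls.

Section Omega.
Variable A : fusion_data.
Hypothesis hA : support_axioms A.
Implicit Types X : set (fa_I A).

Lemma omega_XE X : finite_set X -> omega_X X = growth_rate (ball_mass X).
Proof. by move=> fX; apply: fekete; apply: ball_mass_submultiplicative. Qed.

Lemma omega_le_omega_X X : is_gen_set X -> omega A <= omega_X X.
Proof.
move=> gX; apply: ge_inf; last by exists X.
by exists 0 => _ [Y [fY _ _] <-]; rewrite omega_XE ?growth_rate_ge0.
Qed.

Lemma omega_lt h : finitely_generated A -> omega A < h ->
  exists2 X : set (fa_I A), is_gen_set X & omega_X X < h.
Proof.
move=> [X0 gX0] lt_h; have [|_ [X gX <-] ?] := inf_lt _ lt_h; first by exists (omega_X X0), X0.
by exists X.
Qed.

End Omega.

(** * Projections and products *)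

Lemma lift_seq_image (T U : eqType) (f : T -> U) (X : set T) (xs : seq U) :
  (forall x, x \in xs -> (f @` X) x) -> exists2 zs, map f zs = xs & forall z, z \in zs -> X z.
Proof.
elim: xs => [|x xs IHxs] Xxs; first by exists [::].
have [z Xz <-] := Xxs x (mem_head x xs).
have [|zs <- Xzs] := IHxs; first by move=> y y_xs; apply: Xxs; rewrite inE y_xs orbT.
by exists (z :: zs) => // y; rewrite inE => /orP[/eqP ->|/Xzs].
Qed.

Record fusion_proj (A A' : fusion_data) (f : fa_I A -> fa_I A') : Prop := FusionProj {
  proj_e : f (fa_e A) = fa_e A';
  proj_bar : forall a, f (fa_bar a) = fa_bar (f a);
  proj_surj : forall a', exists a, f a = a';
  proj_prod_coef : forall zs a', prod_coef (map f zs) a' != 0%N <->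
    exists2 a, f a = a' & prod_coef zs a != 0%N;
  proj_dim : forall a, fa_d (f a) ^+ 2 <= fa_d a ^+ 2 }.

Section Projection.
Variables (A A' : fusion_data) (f : fa_I A -> fa_I A').
Hypothesis hf : fusion_proj f.
Local Notation ball := Defs.ball.
Implicit Types X : set (fa_I A).

Lemma is_gen_set_proj X : is_gen_set X -> is_gen_set (f @` X).
Proof.
case=> fX barX genX; split; first exact: finite_image.
  have bar_f : @fa_bar A' \o f = f \o @fa_bar A by apply/funext => a /=; rewrite (proj_bar hf).
  by rewrite image_comp bar_f -image_comp barX.
move=> a'; have [a <-] := proj_surj hf a'; have [zs [zs0 Xzs pa]] := genX a.
exists (map f zs); split; first by rewrite size_map.
  by move=> _ /mapP[z zs_z ->]; exists z => //; apply: Xzs.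
by apply/(proj_prod_coef hf); exists a.
Qed.

Lemma ball_proj_sub X n : ball (f @` X) n `<=` f @` ball X n.
Proof.
move=> a' [->|[xs' [xs'n Xxs' pa']]]; first by exists (fa_e A); [left|apply: proj_e].
have [zs fzs Xzs] := lift_seq_image Xxs'.
move: pa'; rewrite -fzs => /(proj_prod_coef hf) [a <- pa]; exists a => //.
by right; exists zs; rewrite -(size_map f) fzs.
Qed.

Lemma omega_le_omega_X_proj X : support_axioms A -> support_axioms A' ->
  is_gen_set X -> omega A' <= omega_X X.
Proof.
move=> hA hA' gX; have fX : finite_set X by case: gX.
apply: le_trans (omega_le_omega_X hA' (is_gen_set_proj gX)) _.
rewrite (omega_XE hA' (finite_image f fX)) (omega_XE hA fX).
apply: le_growth_rate => n; rewrite /ball_mass dmass_ge0 /=.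
apply: le_trans _ (dmass_image_le (ball_finite hA n fX) (fun a _ => proj_dim hf a)).
by apply: le_dmass (@ball_proj_sub X n); apply: finite_image; apply: ball_finite.
Qed.

End Projection.

Section Product.
Variables A1 A2 : fusion_data.
Hypotheses (hA1 : support_axioms A1) (hA2 : support_axioms A2).
Local Notation P := (product_fusion A1 A2).
Local Notation e1 := (@fa_e A1).
Local Notation e2 := (@fa_e A2).
Local Notation ball := Defs.ball.

Lemma product_support_axioms : support_axioms P.
Proof.
split.
- move=> [x1 x2] [y1 y2].
  apply: sub_finite_set (finite_setX (N_supp_finite hA1 x1 y1) (N_supp_finite hA2 x2 y2)).
  by move=> [a1 a2] /=; rewrite muln_eq0 negb_or => /andP[].
- by move=> [a1 a2] [b1 b2] /=; rewrite muln_eq0 negb_or !N_unit_neq0 // xpair_eqE.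
- move=> [a1 a2] [x1 x2] [c1 c2] [b1 b2] [f1 f2] /=; rewrite !muln_eq0 !negb_or.
  move=> /andP[Na1 Na2] /andP[Nc1 Nc2].
  have [g1 Ng1 Na1g] := N_supp_assoc hA1 Na1 Nc1.
  have [g2 Ng2 Na2g] := N_supp_assoc hA2 Na2 Nc2.
  by exists (g1, g2); rewrite /= muln_eq0 negb_or ?Ng1 ?Ng2 ?Na1g ?Na2g.
- move=> [b1 b2] [c1 c2] /=.
  have -> : [set a : fa_I P | (fa_N a.1 b1 c1 * fa_N a.2 b2 c2)%N != 0%N] =
      [set a | fa_N a b1 c1 != 0%N] `*` [set a | fa_N a b2 c2 != 0%N].
    by apply/seteqP; split=> -[a1 a2] /=; rewrite muln_eq0 negb_or; [case/andP|case=> -> ->].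
  have := dmass_setX (N_supp_finite hA1 b1 c1) (N_supp_finite hA2 b2 c2).
  rewrite /Defs.dmass => ->.
  have -> : (fa_d b1 * fa_d b2 * (fa_d c1 * fa_d c2)) ^+ 2 =
      (fa_d b1 * fa_d c1) ^+ 2 * (fa_d b2 * fa_d c2) ^+ 2.
    by rewrite -exprMn mulrACA.
  by apply: ler_pM; rewrite ?dmass_ge0 ?N_supp_mass.
- move=> [a1 a2] /=; rewrite -[1]mulr1; apply: ler_pM => //; exact: dim_ge1.
- move=> [x1 x2] [y1 y2].
  have [a1 Na1] := N_supp_neq0 hA1 x1 y1; have [a2 Na2] := N_supp_neq0 hA2 x2 y2.
  by exists (a1, a2); rewrite /= muln_eq0 negb_or Na1 Na2.
Qed.

Let hP := product_support_axioms.

Lemma prod_coef_pair (zs : seq (fa_I P)) (a : fa_I P) : prod_coef zs a != 0%N <->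
  prod_coef (map fst zs) a.1 != 0%N /\ prod_coef (map snd zs) a.2 != 0%N.
Proof.
elim: zs a => [|z zs IHzs] [a1 a2].
  by rewrite /= xpair_eqE; case: (a1 == e1); case: (a2 == e2); split=> // -[].
split.
  move=> /(prod_coef_cons hP) [[b1 b2] /=]; rewrite muln_eq0 negb_or => /andP[Nb1 Nb2].
  move=> /IHzs [/= pb1 pb2].
  by split; [apply/(prod_coef_cons hA1); exists b1|apply/(prod_coef_cons hA2); exists b2].
move=> [/(prod_coef_cons hA1) [b1 Nb1 pb1] /(prod_coef_cons hA2) [b2 Nb2 pb2]].
apply/(prod_coef_cons hP); exists (b1, b2); last exact/IHzs.
by rewrite /= muln_eq0 negb_or Nb1 Nb2.
Qed.

Lemma fusion_proj_fst : fusion_proj (fst : fa_I P -> fa_I A1).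
Proof.
split=> // [a1|zs a1|[a1 a2]]; first by exists (a1, e2).
- split=> [pa1|[a <- /prod_coef_pair[]//]].
  have [a2 pa2] := prod_coef_exists hA2 (map snd zs).
  by exists (a1, a2); last exact/prod_coef_pair.
- by rewrite /= lerXn2r ?nnegrE ?mulr_ge0 ?ler_peMr ?dim_ge1 ?dim_ge0.
Qed.

Lemma fusion_proj_snd : fusion_proj (snd : fa_I P -> fa_I A2).
Proof.
split=> // [a2|zs a2|[a1 a2]]; first by exists (e1, a2).
- split=> [pa2|[a <- /prod_coef_pair[]//]].
  have [a1 pa1] := prod_coef_exists hA1 (map fst zs).
  by exists (a1, a2); last exact/prod_coef_pair.
- by rewrite /= lerXn2r ?nnegrE ?mulr_ge0 ?ler_peMl ?dim_ge1 ?dim_ge0.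
Qed.

Definition prod_gens (X1 : set (fa_I A1)) (X2 : set (fa_I A2)) : set (fa_I P) :=
  X1 `*` [set e2] `|` [set e1] `*` X2.

Lemma is_gen_set_prod_gens X1 X2 : fa_bar e1 = e1 -> fa_bar e2 = e2 ->
  is_gen_set X1 -> is_gen_set X2 -> is_gen_set (prod_gens X1 X2).
Proof.
move=> bar_e1 bar_e2 [fX1 barX1 genX1] [fX2 barX2 genX2]; split.
- by rewrite finite_setU; split; apply: finite_setX.
- apply/seteqP; split=> [_ [[x1 x2] Gx <-]|[x1 x2] Gx]; case: Gx => [[/= Xx ->]|[/= -> Xx]].
  + by left; split=> /=; [rewrite -barX1; exists x1|rewrite bar_e2].
  + by right; split=> /=; [rewrite bar_e1|rewrite -barX2; exists x2].
  + have [y1 X1y1 <-] : (@fa_bar A1 @` X1) x1 by rewrite barX1.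
    by exists (y1, e2); [left|rewrite /= bar_e2].
  + have [y2 X2y2 <-] : (@fa_bar A2 @` X2) x2 by rewrite barX2.
    by exists (e1, y2); [right|rewrite /= bar_e1].
- move=> [a1 a2]; have [xs1 [xs10 X1xs1 pa1]] := genX1 a1; have [xs2 [_ X2xs2 pa2]] := genX2 a2.
  exists ([seq (x, e2) | x <- xs1] ++ [seq (e1, y) | y <- xs2]); split.
  + by rewrite size_cat size_map addn_gt0 xs10.
  + move=> z; rewrite mem_cat => /orP[] /mapP[x xs_x ->]; [left|right]; split=> //.
      exact: X1xs1.
    exact: X2xs2.
  apply/prod_coef_pair; rewrite !map_cat -!map_comp /= !map_id; split.
    apply: (prod_coef_eq_filter_e hA1 _ pa1).
    rewrite filter_cat [X in _ ++ X](_ : _ = [::]) ?cats0 //.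
    by elim: (xs2) => //= y ys ->; rewrite eqxx.
  apply: (prod_coef_eq_filter_e hA2 _ pa2).
  rewrite filter_cat [X in X ++ _](_ : _ = [::]) //.
  by elim: (xs1) => //= x xs ->; rewrite eqxx.
Qed.

Lemma ball_prod_gens_sub X1 X2 n : ball (prod_gens X1 X2) n `<=`
  \big[setU/set0]_(k < n.+1) (ball X1 k `*` ball X2 (n - k)%N : set (fa_I P)).
Proof.
pose F k : set (fa_I P) := ball X1 k `*` ball X2 (n - k)%N.
have F_sub k : (k < n.+1)%N -> F k `<=` \big[setU/set0]_(j < n.+1) F j by apply: bigsetU_sup.
move=> [a1 a2] [[-> ->]|[zs [/andP[_ zsn] Xzs /prod_coef_pair [/= pa1 pa2]]]].
  by apply: (F_sub 0%N) => //; split; apply: ball_e.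
set ws1 := [seq w <- map fst zs | w != e1]; set ws2 := [seq w <- map snd zs | w != e2].
have ws1_X1 w : w \in ws1 -> X1 w.
  rewrite mem_filter => /andP[w_e1 /mapP[z /Xzs [[X1z _]|[z_e1 _]] w_z]]; first by rewrite w_z.
  by rewrite w_z z_e1 eqxx in w_e1.
have ws2_X2 w : w \in ws2 -> X2 w.
  rewrite mem_filter => /andP[w_e2 /mapP[z /Xzs [[_ z_e2]|[_ X2z]] w_z]]; last by rewrite w_z.
  by rewrite w_z z_e2 eqxx in w_e2.
(* Every letter of a word in [prod_gens X1 X2] is trivial in one of the two coordinates. *)
have size_ws : (size ws1 + size ws2 <= size zs)%N.
  rewrite /ws1 /ws2 !size_filter !count_map -count_predUI.
  rewrite [X in (_ + X)%N](@eq_in_count _ _ pred0).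
    by rewrite count_pred0 addn0 count_size.
  by move=> z /Xzs [[_ z_e2]|[z_e1 _]] /=; rewrite ?z_e1 ?z_e2 eqxx ?andbF.
have size_ws_n : (size ws1 + size ws2 <= n)%N := leq_trans size_ws zsn.
apply: (F_sub (size ws1)); first by rewrite ltnS (leq_trans (leq_addr _ _) size_ws_n).
split=> /=; first by apply: ball_word ws1_X1 _; apply/prod_coef_filter_e.
apply: (subset_ball (m := size ws2)).
  by rewrite leq_subRL ?(leq_trans (leq_addr _ _) size_ws_n).
by apply: ball_word ws2_X2 _; apply/prod_coef_filter_e.
Qed.

Lemma omega_X_prod_gens_le X1 X2 : finite_set X1 -> finite_set X2 ->
  omega_X (prod_gens X1 X2) <= Num.max (omega_X X1) (omega_X X2).
Proof.
move=> fX1 fX2; have fX : finite_set (prod_gens X1 X2).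
  by rewrite finite_setU; split; apply: finite_setX.
rewrite !omega_XE //; apply: growth_rate_convolution; try exact: ball_mass_submultiplicative.
move=> n; rewrite /ball_mass dmass_ge0 /=.
have fB k : finite_set (ball X1 k `*` ball X2 (n - k)%N : set (fa_I P)).
  by apply: finite_setX; apply: ball_finite.
apply: le_trans (le_dmass _ (@ball_prod_gens_sub X1 X2 n)) _.
  rewrite -(bigcup_mkord _ (fun k => ball X1 k `*` ball X2 (n - k)%N : set (fa_I P))).
  by apply: bigcup_finite (finite_II _) _ => k _.
apply: le_trans (dmass_bigsetU_le _ (fun k : 'I_n.+1 => fB k)) _.
by apply: ler_sum => k _; rewrite dmass_setX //; apply: ball_finite.
Qed.

End Product.

Section ProductOmega.
Variables A1 A2 : fusion_data.
Hypotheses (hA1 : support_axioms A1) (hA2 : support_axioms A2).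
Local Notation P := (product_fusion A1 A2).

Lemma max_omega_le_omega_product :
  finitely_generated P -> Num.max (omega A1) (omega A2) <= omega P.
Proof.
move=> [X0 gX0]; apply: lb_le_inf; first by exists (omega_X X0), X0.
move=> _ [X gX <-].
have hP := product_support_axioms hA1 hA2.
by rewrite ge_max (omega_le_omega_X_proj (fusion_proj_fst hA1 hA2))
  ?(omega_le_omega_X_proj (fusion_proj_snd hA1 hA2)).
Qed.

Lemma omega_product_le_max : fa_bar (fa_e A1) = fa_e A1 -> fa_bar (fa_e A2) = fa_e A2 ->
  finitely_generated A1 -> finitely_generated A2 ->
  omega P <= Num.max (omega A1) (omega A2).
Proof.
move=> bar_e1 bar_e2 fg1 fg2; apply/ler_addgt0Pr => eps e0.
have [X1 gX1 X1_lt] : exists2 X1 : set (fa_I A1), is_gen_set X1 & omega_X X1 < omega A1 + eps.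
  by apply: omega_lt; rewrite ?ltrDl.
have [X2 gX2 X2_lt] : exists2 X2 : set (fa_I A2), is_gen_set X2 & omega_X X2 < omega A2 + eps.
  by apply: omega_lt; rewrite ?ltrDl.
have gX := is_gen_set_prod_gens hA1 hA2 bar_e1 bar_e2 gX1 gX2.
apply: le_trans (omega_le_omega_X (product_support_axioms hA1 hA2) gX) _.
have [[fX1 _ _] [fX2 _ _]] := (gX1, gX2).
apply: le_trans (omega_X_prod_gens_le hA1 hA2 fX1 fX2) _.
rewrite ge_max (le_trans (ltW X1_lt)) ?(le_trans (ltW X2_lt)) //.
  by rewrite lerD2r le_max lexx orbT.
by rewrite lerD2r le_max lexx.
Qed.

End ProductOmega.

Theorem proposition3p13 (A1 A2 : fusion_data) :
  is_fusion_algebra A1 -> is_fusion_algebra A2 ->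
  finitely_generated A1 -> finitely_generated A2 ->
  omega (product_fusion A1 A2) = Num.max (omega A1) (omega A2).
Proof.
move=> h1 h2 fg1 fg2.
have [hA1 hA2] := (fusion_support_axioms h1, fusion_support_axioms h2).
have [[X1 gX1] [X2 gX2]] := (fg1, fg2).
have fgP : finitely_generated (product_fusion A1 A2).
  by exists (prod_gens X1 X2); apply: is_gen_set_prod_gens; rewrite ?fusion_bar_e.
apply/eqP; rewrite eq_le max_omega_le_omega_product // andbT.
by apply: omega_product_le_max; rewrite ?fusion_bar_e.
Qed.
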